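(* Let $d\ge 1$. Given a set of $d+3$ points in $\mathbb{R}^d$, there are two disjoint subsets $A$ and $B$ of it with $|A|=|B|$ such that $\mathrm{conv}(A)\cap\mathrm{conv}(B)\neq\emptyset$. *)

From HB Require Import structures.
From mathcomp Require Import all_boot all_order all_algebra.
From mathcomp Require Import reals.
Set Implicit Arguments. Unset Strict Implicit. Unset Printing Implicit Defensive.
Import Order.TTheory GRing.Theory Num.Theory.
Local Open Scope ring_scope.

(* A finite set of n points is
   given by an injective indexing p : 'I_n -> 'rV[R]_d; a subset of it is
   given by a set of indices A : {set 'I_n}. *)
Definition in_conv (R : realType) (d n : nat) (p : 'I_n -> 'rV[R]_d)
    (A : {set 'I_n}) (x : 'rV[R]_d) : Prop :=
  exists w : 'I_n -> R,
    (forall i, i \in A -> 0 <= w i) /\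
    \sum_(i in A) w i = 1 /\
    x = \sum_(i in A) w i *: p i.

From HB Require Import structures.
From mathcomp Require Import all_boot all_order all_algebra.
From mathcomp Require Import reals.
From mathcomp Require classical_sets.
From mathcomp Require Import ring lra zify.
Import Order.TTheory GRing.Theory Num.Theory.
Local Open Scope ring_scope.

(* The affine dependences of n = d + 3 points of R^d form a space of
   dimension at least 2.  Along a pencil u + t v of such dependences, where v
   has more than k = n/2 (rounded down) positive entries, the number of
   negative entries exceeds k for t near -oo and the number of positive ones
   exceeds k for t near +oo; at the supremum of the first region both counts
   are at most k.  Padding the positive and the negative supports of this
   dependence with zero-weight indices gives two disjoint sets of size k, and
   normalising the positive and the negative part gives a common point of
   their convex hulls. *)

Lemma exists_subset_card (T : finType) (C : {set T}) m :
  (m <= #|C|)%N -> exists2 A : {set T}, A \subset C & #|A| = m.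
Proof.
case/card_geqP => s [uniq_s size_s sC]; exists [set x in s].
  by apply/subsetP => x; rewrite inE => /sC.
by rewrite cardsE -size_s; apply/card_uniqP.
Qed.

Lemma exists_card_between {T : finType} {P C : {set T}} {m} :
  P \subset C -> (#|P| <= m <= #|C|)%N ->
  exists A : {set T}, [/\ P \subset A, A \subset C & #|A| = m].
Proof.
move=> PC /andP[Pm mC].
have [D DCP cD] : exists2 D : {set T}, D \subset C :\: P & #|D| = (m - #|P|)%N.
  by apply: exists_subset_card; rewrite cardsD (setIidPr PC); lia.
have PD0 : P :&: D = set0.
  apply/setP => x; rewrite !inE; apply/negbTE/andP => -[xP /(subsetP DCP)].
  by rewrite inE xP.
exists (P :|: D); split; first exact: subsetUl.
  by rewrite subUset PC (subset_trans DCP) ?subsetDl.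
by rewrite cardsU PD0 cards0 cD; lia.
Qed.

Lemma pad_disjoint {T : finType} {P N : {set T}} {k} :
  [disjoint P & N] -> (#|P| <= k)%N -> (#|N| <= k)%N -> (k.*2 <= #|T|)%N ->
  exists A B : {set T},
    [/\ P \subset A, N \subset B, [disjoint A & B], #|A| = k & #|B| = k].
Proof.
move=> dPN Pk Nk kT.
have cC (X : {set T}) : #|~: X| = (#|T| - #|X|)%N by rewrite -(cardsC X); lia.
have [A [PA AN cA]] : exists A : {set T}, [/\ P \subset A, A \subset ~: N & #|A| = k].
  by apply: exists_card_between; rewrite -?disjoints_subset // Pk cC; lia.
have [B [NB BA cB]] : exists B : {set T}, [/\ N \subset B, B \subset ~: A & #|B| = k].
  apply: exists_card_between; last by rewrite Nk cC cA; lia.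
  by rewrite -disjoints_subset disjoint_sym disjoints_subset.
by exists A, B; split => //; rewrite disjoint_sym disjoints_subset.
Qed.

Lemma sum_disjoint_support {V : nmodType} {T : finType} {A B : {set T}}
    (F : T -> V) :
  [disjoint A & B] -> (forall i, i \notin A -> i \notin B -> F i = 0) ->
  \sum_i F i = \sum_(i in A) F i + \sum_(i in B) F i.
Proof.
move=> dAB F0; rewrite -bigU //; symmetry; apply: big_rmcond => i.
by rewrite !inE negb_or => /andP[/F0]; apply.
Qed.

Section SignPattern.
Context {R : realType} {n : nat}.
Implicit Types (u v w : 'I_n -> R) (k : nat).

Definition balanced k w :=
  (#|[set i | (0 < w i)%R]| <= k)%N && (#|[set i | (w i < 0)%R]| <= k)%N.

Lemma eq_balanced k w w' : w =1 w' -> balanced k w = balanced k w'.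
Proof.
move=> ww'; rewrite /balanced.
have -> : [set i | 0 < w i] = [set i | 0 < w' i] by apply/setP => i; rewrite !inE ww'.
by have -> : [set i | w i < 0] = [set i | w' i < 0] by apply/setP => i; rewrite !inE ww'.
Qed.

Lemma card_pos_neg w : (#|[set i | (0 < w i)%R]| + #|[set i | (w i < 0)%R]| <= n)%N.
Proof.
rewrite -cardsUI.
have -> : [set i | 0 < w i] :&: [set i | w i < 0] = set0.
  by apply/setP => i; rewrite !inE; apply/negbTE/andP => -[/lt_trans h/h]; rewrite ltxx.
by rewrite cards0 addn0 -[X in (_ <= X)%N]card_ord max_card.
Qed.

Lemma neg_set_opp u v (s : R) :
  [set i | u i + s * v i < 0] = [set i | 0 < - u i + s * - v i].
Proof. by apply/setP => i; rewrite !inE mulrN -opprD oppr_gt0. Qed.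

Lemma pos_set_stable u v (t : R) :
  exists2 e : R, 0 < e & forall s, `|s - t| <= e ->
    [set i | 0 < u i + t * v i] \subset [set i | 0 < u i + s * v i].
Proof.
set J := [set i | 0 < u i + t * v i].
set S := \sum_(i in J) `|v i| / (u i + t * v i).
have S0 : 0 <= S by apply: sumr_ge0 => i; rewrite inE => a0; rewrite divr_ge0 // ltW.
exists (1 + S)^-1 => [|s hs]; first by rewrite invr_gt0; lra.
apply/subsetP => i iJ; move: (iJ); rewrite !inE => a0.
set a := u i + t * v i in a0 *.
have vS : `|v i| <= S * a.
  rewrite -ler_pdivrMr // /S (bigD1 i) //= lerDl.
  by apply: sumr_ge0 => j /andP[]; rewrite inE => a0' _; rewrite divr_ge0 // ltW.
have small : `|(s - t) * v i| < a.
  rewrite normrM; apply: (le_lt_trans (ler_pM _ _ hs vS)) => //.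
  by rewrite ltr_pdivrMl; nra.
have -> : u i + s * v i = a + (s - t) * v i by rewrite /a; ring.
have := ler_norm (- ((s - t) * v i)); rewrite normrN; lra.
Qed.

Lemma neg_set_stable u v (t : R) :
  exists2 e : R, 0 < e & forall s, `|s - t| <= e ->
    [set i | u i + t * v i < 0] \subset [set i | u i + s * v i < 0].
Proof.
have [e e0 he] := pos_set_stable (fun i => - u i) (fun i => - v i) t.
by exists e => // s hs; rewrite !neg_set_opp; apply: he.
Qed.

Lemma sign_eventually u v : exists M : R, forall (t : R) i, 0 < v i ->
  (M < t -> 0 < u i + t * v i) /\ (t < - M -> u i + t * v i < 0).
Proof.
exists (\sum_j `|u j| / `|v j|) => t i vi.
have uM : `|u i| <= (\sum_j `|u j| / `|v j|) * v i.
  rewrite -ler_pdivrMr // -[v i]gtr0_norm // (bigD1 i) //= lerDl.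
  by apply: sumr_ge0 => j _; rewrite divr_ge0.
have := ler_norm (u i); have := ler_norm (- u i); rewrite normrN.
by split => ?; nra.
Qed.

Lemma balanced_shift k u v : (n <= k.*2.+1)%N ->
  (k < #|[set i | (0 < v i)%R]|)%N -> exists t, balanced k (fun i => u i + t * v i).
Proof.
move=> nk vk.
pose Pc t := #|[set i | 0 < u i + t * v i]|.
pose Nc t := #|[set i | u i + t * v i < 0]|.
have Pc_Nc t : (k < Pc t)%N -> (Nc t <= k)%N.
  by have := card_pos_neg (fun i => u i + t * v i); rewrite -/(Pc t) -/(Nc t); lia.
have [M hM] := sign_eventually u v.
have contains_pos_v (S : {set 'I_n}) : (forall i, 0 < v i -> i \in S) -> (k < #|S|)%N.
  move=> vS; apply: leq_trans vk (subset_leq_card _).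
  by apply/subsetP => i; rewrite inE => /vS.
pose E t := (k < Nc t)%N.
have E_ub t : E t -> t <= M.
  rewrite /E leNgt => Et; apply/negP => Mt.
  have Pt : (k < Pc t)%N by apply: contains_pos_v => i vi; rewrite inE; exact: (hM t i vi).1.
  by have := Pc_Nc t Pt; rewrite leqNgt Et.
have hE : classical_sets.has_sup E.
  split; last by exists M; exact: E_ub.
  exists (- M - 1); apply: contains_pos_v.
  by move=> i vi; rewrite inE; apply: (hM _ i vi).2; lra.
have E_le_sup t : E t -> t <= sup E := @sup_upper_bound _ _ hE t.
exists (sup E); apply/andP; split; rewrite leqNgt; apply/negP.
- move=> Pk; have [e e0 he] := pos_set_stable u v (sup E).
  have [t Et lt_t] := sup_adherent e0 hE.
  have t_le := E_le_sup t Et.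
  move: Et; apply/negP; rewrite /E -leqNgt; apply: Pc_Nc.
  apply: leq_trans Pk (subset_leq_card (he t _)).
  by rewrite ler_norml; apply/andP; split; lra.
- move=> Nk; have [e e0 he] := neg_set_stable u v (sup E).
  have : E (sup E + e).
    apply: leq_trans Nk (subset_leq_card (he _ _)).
    by rewrite addrAC subrr add0r gtr0_norm.
  by move/E_le_sup; lra.
Qed.

Lemma balanced_combination k u v : (n <= k.*2.+1)%N ->
  exists a b : R, ((a != 0) || (b != 0)) /\ balanced k (fun i => a * u i + b * v i).
Proof.
move=> nk.
have [v_bal|] := boolP (balanced k v).
  exists 0, 1; rewrite oner_neq0 orbT; split => //.
  by rewrite (eq_balanced k _ v) // => i; rewrite mul0r add0r mul1r.
rewrite negb_and -!ltnNge => /orP[pos_v|neg_v].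
  have [t bal] := balanced_shift k u v nk pos_v.
  exists 1, t; rewrite oner_neq0; split => //.
  by rewrite (eq_balanced k _ (fun i => u i + t * v i)) // => i; rewrite mul1r.
have neg_v' : (k < #|[set i | (0 < - v i)%R]|)%N.
  by rewrite (eq_card (B := [set i | v i < 0])) // => i; rewrite !inE oppr_gt0.
have [t bal] := balanced_shift k u (fun i => - v i) nk neg_v'.
exists 1, (- t); rewrite oner_neq0; split => //.
by rewrite (eq_balanced k _ (fun i => u i + t * - v i)) // => i; rewrite mul1r mulrN mulNr.
Qed.

End SignPattern.

Section AffineDependence.
Context {R : realType} {d n : nat} (p : 'I_n -> 'rV[R]_d).

Definition affine_dep (w : 'I_n -> R) :=
  \sum_i w i = 0 /\ \sum_i w i *: p i = 0.

Lemma affine_dep_comb (a b : R) {u v} : affine_dep u -> affine_dep v ->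
  affine_dep (fun i => a * u i + b * v i).
Proof.
move=> [su up] [sv vp]; split.
  by rewrite big_split /= -!mulr_sumr su sv !mulr0 addr0.
under eq_bigr do rewrite scalerDl -!scalerA.
by rewrite big_split /= -!scaler_sumr up vp !scaler0 addr0.
Qed.

Lemma mulmx_col_eq0 (l : 'rV[R]_n) (c : 'I_n -> R) :
  l *m \col_i c i = 0 -> \sum_i l 0 i * c i = 0.
Proof.
move=> /(congr1 (fun M : 'M_1 => M 0 0)); rewrite !mxE => h; rewrite -[RHS]h.
by apply: eq_bigr => i _; rewrite mxE.
Qed.

Lemma exists_affine_dep_orth (c : 'I_n -> R) : (d + 2 < n)%N ->
  exists w, [/\ exists j, w j != 0, affine_dep w & \sum_i w i * c i = 0].
Proof.
move=> dn.
pose Q := row_mx (\matrix_i p i) (row_mx (\col_(i < n) (1 : R)) (\col_i c i)).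
have : kermx Q != 0.
  by rewrite -mxrank_eq0 mxrank_ker; have := rank_leq_col Q; lia.
case/rowV0Pn => l /sub_kermxP; rewrite !mul_mx_row => /eqP.
rewrite !row_mx_eq0 => /andP[/eqP lp /andP[/eqP/mulmx_col_eq0 l1 /eqP/mulmx_col_eq0 lc]] l0.
exists (fun i => l 0 i); split => //.
- apply/existsP; apply: contraNT l0 => /existsPn l0.
  by apply/eqP/rowP => j; rewrite mxE; apply/eqP/negPn.
- split; first by rewrite -[RHS]l1; under [RHS]eq_bigr do rewrite mulr1.
  by rewrite -[RHS]lp mulmx_sum_row; apply: eq_bigr => i _; rewrite rowK.
Qed.

Lemma independent_affine_deps : (d + 2 < n)%N ->
  exists u v, [/\ affine_dep u, affine_dep v & forall a b : R,
    (a != 0) || (b != 0) -> exists j, a * u j + b * v j != 0].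
Proof.
move=> dn.
have [v [[i0 vi0] dv _]] := exists_affine_dep_orth (fun=> 0) dn.
(* Orthogonality to the indicator of [i0] makes [u] vanish where [v] does not. *)
have [u [[i1 ui1] du ui0]] := exists_affine_dep_orth (fun i => (i == i0)%:R) dn.
have {}ui0 : u i0 = 0.
  rewrite -ui0 (bigD1 i0) //= eqxx mulr1 big1 ?addr0 // => i /negbTE ->.
  by rewrite mulr0.
exists u, v; split => // a b; have [-> | b0] := eqVneq b 0.
  by rewrite orbF => a0; exists i1; rewrite mul0r addr0 mulf_neq0.
by exists i0; rewrite ui0 mulr0 add0r mulf_neq0.
Qed.

Lemma in_conv_normalize (A : {set 'I_n}) (w : 'I_n -> R) :
  (forall i, i \in A -> 0 <= w i) -> 0 < \sum_(i in A) w i ->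
  in_conv p A ((\sum_(i in A) w i)^-1 *: \sum_(i in A) w i *: p i).
Proof.
move=> w_ge0 s_gt0; exists (fun i => w i / \sum_(j in A) w j); split; [|split].
- by move=> i /w_ge0 wi; rewrite divr_ge0 // ltW.
- by rewrite -mulr_suml mulfV // gt_eqF.
- by rewrite scaler_sumr; apply: eq_bigr => i _; rewrite scalerA mulrC.
Qed.

Lemma radon_affine_dep (w : 'I_n -> R) (A B : {set 'I_n}) :
  (exists j, w j != 0) -> affine_dep w -> [disjoint A & B] ->
  [set i | 0 < w i] \subset A -> [set i | w i < 0] \subset B ->
  exists x, in_conv p A x /\ in_conv p B x.
Proof.
move=> [j wj] [sw swp] dAB posA negB.
have wA i : i \in A -> 0 <= w i.
  move=> iA; rewrite leNgt; apply/negP => wi.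
  by rewrite (disjointFl dAB (subsetP negB i _)) ?inE in iA.
have wB i : i \in B -> w i <= 0.
  move=> iB; rewrite leNgt; apply/negP => wi.
  by rewrite (disjointFr dAB (subsetP posA i _)) ?inE in iB.
have w0 i : i \notin A -> i \notin B -> w i = 0.
  move=> iA iB; apply/eqP; rewrite eq_le !leNgt; apply/andP; split; apply/negP => wi.
  - by rewrite (subsetP posA) ?inE in iA.
  - by rewrite (subsetP negB) ?inE in iB.
set sA := \sum_(i in A) w i; set sB := \sum_(i in B) w i.
have sAB : sA + sB = 0 by rewrite -sw (sum_disjoint_support _ dAB w0).
have vAB : \sum_(i in A) w i *: p i = - \sum_(i in B) w i *: p i.
  apply/eqP; rewrite -addr_eq0; apply/eqP; rewrite -[RHS]swp; symmetry.
  by apply: (sum_disjoint_support (fun i => w i *: p i)) => // i iA iB; rewrite w0 ?scale0r.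
have sA_gt0 : 0 < sA.
  rewrite lt_def sumr_ge0 // andbT; apply: contra wj => /eqP sA0.
  have wA0 := psumr_eq0P wA sA0.
  have wB0 : forall i, i \in B -> - w i = 0.
    by apply: psumr_eq0P => [i /wB|]; rewrite ?oppr_ge0 // sumrN -/sB; lra.
  have [jA|jA] := boolP (j \in A); first by rewrite wA0.
  have [jB|jB] := boolP (j \in B); last by rewrite w0.
  by rewrite -oppr_eq0 wB0.
exists (sA^-1 *: \sum_(i in A) w i *: p i); split; first exact: in_conv_normalize.
have -> : sA = \sum_(i in B) - w i by rewrite sumrN -/sB; lra.
rewrite vAB -sumrN (eq_bigr (fun i => - w i *: p i)) => [|i _]; last by rewrite scaleNr.
apply: in_conv_normalize => [i /wB|]; first by rewrite oppr_ge0.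
by rewrite sumrN -/sB; lra.
Qed.

Lemma radon_balanced k (w : 'I_n -> R) : (k.*2 <= n)%N ->
  (exists j, w j != 0) -> affine_dep w -> balanced k w ->
  exists A B : {set 'I_n},
    [/\ [disjoint A & B], #|A| = #|B| &
        exists x, in_conv p A x /\ in_conv p B x].
Proof.
move=> kn w_nz dep /andP[Pk Nk].
have dPN : [disjoint [set i | 0 < w i] & [set i | w i < 0]].
  by rewrite disjoints_subset; apply/subsetP => i; rewrite !inE -leNgt => /ltW.
have kT : (k.*2 <= #|'I_n|)%N by rewrite card_ord.
have [A [B [PA NB dAB cA cB]]] := pad_disjoint dPN Pk Nk kT.
by exists A, B; split; [|rewrite cA cB|exact: radon_affine_dep w_nz dep dAB PA NB].
Qed.

End AffineDependence.

Theorem corollary2 (R : realType) (d : nat) (hd : (1 <= d)%N)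
  (p : 'I_(d + 3) -> 'rV[R]_d) (hp : injective p) :
  exists A B : {set 'I_(d + 3)},
    [/\ [disjoint A & B], #|A| = #|B| &
        exists x : 'rV[R]_d, in_conv p A x /\ in_conv p B x].
Proof.
have dn : (d + 2 < d + 3)%N by rewrite ltn_add2l.
have [u [v [du dv uv_indep]]] := independent_affine_deps p dn.
set k := (d + 3)./2.
have [kn nk] : (k.*2 <= d + 3 /\ d + 3 <= k.*2.+1)%N.
  by have := odd_double_half (d + 3); case: odd => /=; lia.
have [a [b [ab_nz bal]]] := balanced_combination k u v nk.
exact: radon_balanced p k _ kn (uv_indep a b ab_nz) (affine_dep_comb p a b du dv) bal.
Qed.
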